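(* Let $\lambda$ be a partition (respectively a strict partition) and let $c\ge1$. Then the number of pairs $(T,u)$, where $T$ is a standard Young tableau of shape $[\lambda]$ (respectively a shifted standard Young tableau of shape $[\lambda]^{\mathrm{sh}}$) and $(T,u)$ is a horizontal adjacency lying in column $c$, equals the number of standard Young tableaux of shape $[\lambda]$ (respectively shifted standard Young tableaux of shape $[\lambda]^{\mathrm{sh}}$) whose largest entry $|\lambda|$ lies in a column with index at least $c+1$.
   Context: Matrix coordinates (row $i$, column $j$). $[\lambda]=\{(i,j):i\in[\ell(\lambda)],j\in[\lambda_i]\}$; for strict $\lambda$, $[\lambda]^{\mathrm{sh}}=\{(i,j+i-1):i\in[\ell(\lambda)],j\in[\lambda_i]\}$. A (shifted) standard Young tableau is a bijection from the cell set $D$ to $[|\lambda|]$ increasing along rows (left to right) and columns (top to bottom). For such $T$ and $u=(i,j)\in D$, $(T,u)$ is a horizontal adjacency if $(i,j+1)\in D$ and $T(i,j+1)=T(u)+1$; it lies in column $j$ (and row $i$). *)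

From mathcomp Require Import all_boot.
Set Implicit Arguments. Unset Strict Implicit. Unset Printing Implicit Defensive.

Definition is_partition (l : seq nat) : bool :=
  sorted (fun x y => y <= x) l && all (fun x => 0 < x) l.

Definition is_strict_partition (l : seq nat) : bool :=
  sorted (fun x y => y < x) l && all (fun x => 0 < x) l.

(* Cells in matrix coordinates (row, column), both 1-indexed. *)
Definition young_diagram (l : seq nat) : seq (nat * nat) :=
  flatten [seq [seq (i.+1, j.+1) | j <- iota 0 (nth 0 l i)] | i <- iota 0 (size l)].

Definition shifted_diagram (l : seq nat) : seq (nat * nat) :=
  flatten [seq [seq (i.+1, (j + i).+1) | j <- iota 0 (nth 0 l i)] | i <- iota 0 (size l)].

(* A filling of the cell list D is encoded by the sequence s of its values,
   listed in the order of D: the value at cell u is the (index u D)-th item. *)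
Definition fill (D : seq (nat * nat)) (s : seq nat) (u : nat * nat) : nat :=
  nth 0 s (index u D).

Definition is_syt (D : seq (nat * nat)) (s : seq nat) : bool :=
  perm_eq s (iota 1 (size D)) &&
  all (fun u => all (fun v =>
         ((u.1 == v.1) && (u.2 < v.2) ==> (fill D s u < fill D s v)) &&
         ((u.2 == v.2) && (u.1 < v.1) ==> (fill D s u < fill D s v))) D) D.

Definition syts (D : seq (nat * nat)) : seq (seq nat) :=
  [seq s <- permutations (iota 1 (size D)) | is_syt D s].

Definition hadj_in_col (D : seq (nat * nat)) (s : seq nat) (c : nat)
    (u : nat * nat) : bool :=
  [&& u \in D, u.2 == c, (u.1, u.2.+1) \in D &
      fill D s (u.1, u.2.+1) == (fill D s u).+1].

Definition num_hadj (D : seq (nat * nat)) (c : nat) : nat :=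
  sumn [seq count (hadj_in_col D s c) D | s <- syts D].

Definition num_max_right (D : seq (nat * nat)) (c : nat) : nat :=
  count (fun s => has (fun u => (fill D s u == size D) && (c.+1 <= u.2)) D)
        (syts D).

Example ex1 : size (syts (young_diagram [:: 2; 1])) = 2. Proof. by []. Qed.
Example ex2 : size (syts (shifted_diagram [:: 3; 1])) = 2. Proof. by []. Qed.
Example ex3 : num_hadj (young_diagram [:: 2; 1]) 1 = 1 /\ num_max_right (young_diagram [:: 2; 1]) 1 = 1. Proof. by []. Qed.

From mathcomp Require Import all_boot zify.
Set Implicit Arguments. Unset Strict Implicit. Unset Printing Implicit Defensive.

(* Let f(k) be the number of standard tableaux in which the entry k lies strictly
   right of column c. Exchanging the entries k and k+1 is an involution on the
   tableaux where they share neither a row nor a column, and it trades "k is right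
   of c" for "k+1 is right of c". If they share a column nothing changes; if they
   share a row, row convexity puts k+1 immediately right of k, a horizontal
   adjacency, which is in column c exactly when k+1 crosses from column c to c+1.
   Hence f(k+1) = f(k) + #{(T,u) : the adjacency (k,k+1) lies in column c}, and
   summing telescopes to f(|D|) - f(1) = f(|D|), because 1 always sits in column 1. *)

Lemma count_sum (T : Type) (a : pred T) (r : seq T) : count a r = \sum_(x <- r) a x.
Proof. by rewrite -sum1_count big_mkcond. Qed.

Lemma count_involution (T : eqType) (f : T -> T) (a : pred T) (s : seq T) :
  involutive f -> uniq s -> {in s, forall x, f x \in s} -> count a s = count (a \o f) s.
Proof.
move=> fK s_uniq fs; rewrite -[RHS](count_map f); move: a; apply/permP.
apply: uniq_perm => //.
- by rewrite map_inj_uniq //; apply: inv_inj.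
- move=> x; apply/idP/mapP => [xs|[y ys ->]]; last exact: fs.
  by exists (f x); rewrite ?fK ?fs.
Qed.

Definition before (u v : nat * nat) : bool :=
  ((u.1 == v.1) && (u.2 < v.2)) || ((u.2 == v.2) && (u.1 < v.1)).

Definition transp (k x : nat) : nat :=
  if x == k then k.+1 else if x == k.+1 then k else x.

Lemma transpK k : involutive (transp k).
Proof. by move=> x; rewrite /transp; do !case: eqP => /=; lia. Qed.

Section Tableaux.

Variable D : seq (nat * nat).
Hypothesis D_uniq : uniq D.
Local Notation n := (size D).

(* Inverse of [fill D s]; meaningless unless [m] occurs in [s]. *)
Definition cell (s : seq nat) (m : nat) : nat * nat := nth (0, 0) D (index m s).

Lemma mem_syts s : (s \in syts D) = is_syt D s.
Proof. by rewrite mem_filter mem_permutations andb_idr // => /andP[]. Qed.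

Lemma syts_uniq : uniq (syts D).
Proof. by rewrite filter_uniq // permutations_uniq. Qed.

Section OneTableau.

Variable s : seq nat.
Hypothesis s_syt : is_syt D s.

Lemma syt_perm : perm_eq s (iota 1 n). Proof. by case/andP: s_syt. Qed.

Lemma size_syt : size s = n. Proof. by rewrite (perm_size syt_perm) size_iota. Qed.

Lemma syt_uniq : uniq s. Proof. by rewrite (perm_uniq syt_perm) iota_uniq. Qed.

Lemma mem_syt m : (m \in s) = (0 < m <= n).
Proof. by rewrite (perm_mem syt_perm) mem_iota; lia. Qed.

Lemma mem_fill u : u \in D -> fill D s u \in s.
Proof. by move=> uD; rewrite mem_nth // size_syt index_mem. Qed.

Lemma mem_cell m : m \in s -> cell s m \in D.
Proof. by move=> ms; rewrite mem_nth // -size_syt index_mem. Qed.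

Lemma fillK : {in D, cancel (fill D s) (cell s)}.
Proof.
by move=> u uD; rewrite /cell index_uniq ?nth_index ?syt_uniq // size_syt index_mem.
Qed.

Lemma cellK : {in s, cancel (cell s) (fill D s)}.
Proof. by move=> m ms; rewrite /fill index_uniq ?nth_index // -size_syt index_mem. Qed.

Lemma syt_before u v : u \in D -> v \in D -> before u v -> fill D s u < fill D s v.
Proof.
move=> uD vD uv; case/andP: s_syt => _ /allP/(_ u uD)/allP/(_ v vD)/andP[row col].
by case/orP: uv => [/(implyP row)|/(implyP col)].
Qed.

Lemma count_cells (a : pred (nat * nat)) :
  count a D = count (fun m => a (cell s m)) (iota 1 n).
Proof.
have fill_D : map (fill D s) D = s.
  apply: (@eq_from_nth _ 0); first by rewrite size_map size_syt.
  by move=> i; rewrite size_map => ltiD; rewrite (nth_map (0, 0)) // /fill index_uniq.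
rewrite -(permP syt_perm); transitivity (count (fun m => a (cell s m)) (map (fill D s) D)).
  by rewrite count_map; apply: eq_in_count => u uD /=; rewrite fillK.
by rewrite fill_D.
Qed.

End OneTableau.

Definition succ_aligned (k : nat) (s : seq nat) : bool :=
  ((cell s k).1 == (cell s k.+1).1) || ((cell s k).2 == (cell s k.+1).2).

Section Transposition.

Variable k : nat.
Hypothesis k_gt0 : 0 < k.

Lemma fill_transp s u : fill D (map (transp k) s) u = transp k (fill D s u).
Proof.
rewrite /fill; case: (ltnP (index u D) (size s)) => lt_us; first by rewrite (nth_map 0).
by rewrite !nth_default ?size_map // /transp; do !case: eqP => //; lia.
Qed.

Lemma cell_transp s m : cell (map (transp k) s) m = cell s (transp k m).
Proof.
by rewrite /cell -{1}(transpK k m) index_map //; apply: inv_inj; apply: transpK.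
Qed.

Hypothesis k_lt_n : k < n.

Lemma syt_transp s : is_syt D s -> ~~ succ_aligned k s ->
  is_syt D (map (transp k) s).
Proof.
move=> s_syt unaligned; have transp_inj := inv_inj (transpK k).
apply/andP; split.
  apply: uniq_perm; rewrite ?iota_uniq ?map_inj_uniq ?(syt_uniq s_syt) // => x.
  rewrite -{1}(transpK k x) mem_map // (mem_syt s_syt) mem_iota /transp.
  by do !case: eqP => //; lia.
have ks : k \in s by rewrite (mem_syt s_syt); lia.
have k1s : k.+1 \in s by rewrite (mem_syt s_syt); lia.
apply/allP => u uD; apply/allP => v vD; rewrite !fill_transp.
have not_k_k1 : before u v -> ~~ ((fill D s u == k) && (fill D s v == k.+1)).
  move=> uv; apply/negP => /andP[/eqP fu /eqP fv]; move: unaligned.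
  rewrite /succ_aligned -fv -fu !(fillK s_syt) //; move: uv; rewrite /before.
  by case/orP => /andP[-> _]; rewrite ?orbT.
have mono : before u v -> transp k (fill D s u) < transp k (fill D s v).
  move=> uv; move: (syt_before s_syt uD vD uv) (not_k_k1 uv); rewrite /transp.
  by do !case: eqP => //=; lia.
by apply/andP; split; apply/implyP => uv; apply: mono; rewrite /before uv ?orbT.
Qed.

(* Swapping [k] and [k.+1] keeps a tableau standard when they share neither a row
   nor a column, so the swap is applied only then. *)
Definition transp_unaligned s :=
  if succ_aligned k s then s else map (transp k) s.

Lemma succ_aligned_transp s : succ_aligned k (map (transp k) s) = succ_aligned k s.
Proof.
rewrite /succ_aligned !cell_transp /transp eqxx ifN_eq; last by lia.
by rewrite eqxx eq_sym [_.2 == _]eq_sym.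
Qed.

Lemma transp_unalignedK : involutive transp_unaligned.
Proof.
move=> s; rewrite /transp_unaligned.
have [-> // | /negbTE unaligned] := boolP (succ_aligned k s).
by rewrite succ_aligned_transp unaligned (mapK (transpK k)).
Qed.

Lemma syt_transp_unaligned s : is_syt D s -> is_syt D (transp_unaligned s).
Proof. by rewrite /transp_unaligned; case: ifPn => // unaligned /syt_transp; apply. Qed.

End Transposition.

Hypothesis D_row_convex : forall i a b x,
  (i, a) \in D -> (i, b) \in D -> a < x < b -> (i, x) \in D.

Lemma cell_succ_same_row s k : is_syt D s -> 0 < k < n ->
  (cell s k).1 = (cell s k.+1).1 -> cell s k.+1 = ((cell s k).1, (cell s k).2.+1).
Proof.
move=> s_syt /andP[k_gt0 k_lt_n].
have ks : k \in s by rewrite (mem_syt s_syt); lia.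
have k1s : k.+1 \in s by rewrite (mem_syt s_syt); lia.
move: (mem_cell s_syt ks) (cellK s_syt ks) (mem_cell s_syt k1s) (cellK s_syt k1s).
case: (cell s k) => i a; case: (cell s k.+1) => i' b /= uD fu vD fv ii'; subst i'.
have [lt_ab|le_ba] := ltnP a b; last first.
  have [lt_ba|lt_ab|eq_ba] := ltngtP b a.
  - by have := syt_before s_syt vD uD; rewrite fu fv /before eqxx lt_ba => /(_ isT); lia.
  - by rewrite ltnNge le_ba in lt_ab.
  - by move: fv; rewrite eq_ba fu => /n_Sn.
have [lt_a1b|lt_ba1|-> //] := ltngtP a.+1 b; last by rewrite ltnS leqNgt lt_ab in lt_ba1.
have wD : (i, a.+1) \in D by apply: (D_row_convex uD vD); lia.
have := syt_before s_syt uD wD; have := syt_before s_syt wD vD.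
by rewrite fu fv /before /= eqxx ltnSn lt_a1b /=; lia.
Qed.

(* Only used to force the entry 1 into column 1. *)
Hypothesis D_before : forall u, u \in D -> 1 < u.2 -> exists2 v, v \in D & before v u.

Lemma col_cell1 s : is_syt D s -> 0 < n -> (cell s 1).2 <= 1.
Proof.
move=> s_syt n_gt0; have one_s : 1 \in s by rewrite (mem_syt s_syt); lia.
rewrite leqNgt; apply/negP => /(D_before (mem_cell s_syt one_s))[v vD].
move/(syt_before s_syt vD (mem_cell s_syt one_s)); rewrite cellK //.
by have := mem_fill s_syt vD; rewrite (mem_syt s_syt); lia.
Qed.

Variable c : nat.

Definition right_of (m : nat) (s : seq nat) : bool := c < (cell s m).2.

Definition hadj_at (m : nat) (s : seq nat) : bool := hadj_in_col D s c (cell s m).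

Section Step.

Variable k : nat.
Hypothesis k_gt0 : 0 < k.
Hypothesis k_lt_n : k < n.

Lemma hadj_atE s : is_syt D s ->
  hadj_at k s = ((cell s k).2 == c) && (cell s k.+1 == ((cell s k).1, (cell s k).2.+1)).
Proof.
move=> s_syt; have ks : k \in s by rewrite (mem_syt s_syt); lia.
have k1s : k.+1 \in s by rewrite (mem_syt s_syt); lia.
rewrite /hadj_at /hadj_in_col mem_cell // cellK //=; congr (_ && _).
apply/andP/eqP => [[wD /eqP <-]|<-]; first by rewrite fillK.
by rewrite mem_cell // cellK.
Qed.

Lemma right_of_aligned s : is_syt D s -> succ_aligned k s ->
  right_of k.+1 s = right_of k s + hadj_at k s :> nat.
Proof.
move=> s_syt; rewrite /right_of hadj_atE //.
case/orP=> [/eqP same_row|/eqP same_col].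
  by rewrite (cell_succ_same_row s_syt) ?k_gt0 //= eqxx andbT; lia.
rewrite -same_col; case: (cell s k.+1 =P _) => [right_succ|_]; last by rewrite andbF addn0.
by move: same_col; rewrite right_succ /= => /n_Sn.
Qed.

Lemma count_right_of_unaligned :
  count (predI (right_of k.+1) (predC (succ_aligned k))) (syts D) =
  count (predI (right_of k) (predC (succ_aligned k))) (syts D).
Proof.
rewrite [LHS](count_involution _ (transp_unalignedK k_gt0 k_lt_n) syts_uniq); last first.
  by move=> s; rewrite !mem_syts; apply: syt_transp_unaligned.
apply: eq_count => s /=; rewrite /transp_unaligned.
have [-> | unaligned] /= := boolP (succ_aligned k s); first by rewrite !andbF.
rewrite succ_aligned_transp // unaligned /right_of cell_transp // /transp ifN_eq ?eqxx //; lia.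
Qed.

Lemma hadj_at_succ_aligned s : is_syt D s -> hadj_at k s -> succ_aligned k s.
Proof.
by move=> s_syt; rewrite hadj_atE // /succ_aligned => /andP[_ /eqP ->]; rewrite eqxx.
Qed.

Lemma count_right_of_succ :
  count (right_of k.+1) (syts D) = count (right_of k) (syts D) + count (hadj_at k) (syts D).
Proof.
have split_aligned a : count a (syts D) =
    count (predI a (succ_aligned k)) (syts D) +
    count (predI a (predC (succ_aligned k))) (syts D).
  rewrite -size_filter -(count_predC (succ_aligned k)) !count_filter.
  by congr (_ + _); apply: eq_count => s /=; rewrite [_ && a s]andbC.
have aligned_part : count (predI (right_of k.+1) (succ_aligned k)) (syts D) =
    count (predI (right_of k) (succ_aligned k)) (syts D) + count (hadj_at k) (syts D).
  rewrite !count_sum -big_split; apply: eq_big_seq => s; rewrite mem_syts => s_syt /=.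
  have [al|/negbTE unal] := boolP (succ_aligned k s); first by rewrite !andbT right_of_aligned.
  by have [/(hadj_at_succ_aligned s_syt)|] := boolP (hadj_at k s); rewrite ?unal ?andbF.
rewrite split_aligned [count (right_of k) _]split_aligned aligned_part addnAC.
by rewrite count_right_of_unaligned.
Qed.

End Step.

Hypothesis c_gt0 : 0 < c.

Lemma count_right_of1 : 0 < n -> count (right_of 1) (syts D) = 0.
Proof.
move=> n_gt0; rewrite (eq_in_count (a2 := pred0)) ?count_pred0 // => s.
rewrite mem_syts /right_of => /col_cell1 /(_ n_gt0) col1.
by apply/negbTE; rewrite -leqNgt (leq_trans col1).
Qed.

Lemma hadj_at_last s : is_syt D s -> hadj_at n s = false.
Proof.
move=> s_syt; apply/negP => /and4P[uD _ wD /eqP fw].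
have n_s : n \in s.
  by rewrite (mem_syt s_syt) leqnn andbT -has_predT; apply/hasP; exists (cell s n).
by have := mem_fill s_syt wD; rewrite fw cellK // (mem_syt s_syt) ltnn andbF.
Qed.

Lemma sum_count_hadj_at : 0 < n ->
  \sum_(1 <= k < n.+1) count (hadj_at k) (syts D) = count (right_of n) (syts D).
Proof.
move=> n_gt0; rewrite big_nat_recr //=.
rewrite (eq_in_count (a2 := pred0)) ?count_pred0 ?addn0; last first.
  by move=> s; rewrite mem_syts => /hadj_at_last.
set f := fun k => count (right_of k) (syts D).
have f_succ k : 0 < k < n -> f k.+1 = f k + count (hadj_at k) (syts D).
  by case/andP=> k_gt0 k_lt_n; apply: count_right_of_succ.
rewrite (@eq_big_nat _ _ _ _ _ _ (fun k => f k.+1 - f k)) => [|k k_range]; last first.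
  by rewrite f_succ // addKn.
rewrite telescope_sumn_in // => [|k k_range]; last by rewrite f_succ // leq_addr.
by rewrite [f 1]count_right_of1 // subn0.
Qed.

Lemma num_hadjE : num_hadj D c = \sum_(1 <= k < n.+1) count (hadj_at k) (syts D).
Proof.
rewrite /num_hadj sumnE big_map.
transitivity (\sum_(s <- syts D) \sum_(1 <= k < n.+1) hadj_at k s).
  apply: eq_big_seq => s; rewrite mem_syts => s_syt.
  by rewrite (count_cells s_syt) count_sum /index_iota subn1.
by rewrite exchange_big; apply: eq_bigr => k _; rewrite count_sum.
Qed.

Lemma num_max_rightE : 0 < n -> num_max_right D c = count (right_of n) (syts D).
Proof.
move=> n_gt0; apply: eq_in_count => s; rewrite mem_syts => s_syt.
have n_s : n \in s by rewrite (mem_syt s_syt) n_gt0 leqnn.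
apply/hasP/idP => [[u uD /andP[/eqP fu c_lt]]|c_lt]; first by rewrite /right_of -fu fillK.
by exists (cell s n); rewrite ?mem_cell ?cellK ?eqxx.
Qed.

Theorem num_hadj_eq_num_max_right : num_hadj D c = num_max_right D c.
Proof.
have [/size0nil D0|n_gt0] := posnP n; first by rewrite /num_hadj /num_max_right D0.
by rewrite num_hadjE sum_count_hadj_at // num_max_rightE.
Qed.

End Tableaux.

Lemma uniq_flatten_rows (r : seq nat) (row : nat -> seq (nat * nat)) :
  uniq r -> (forall i, uniq (row i)) -> (forall i u, u \in row i -> u.1 = i.+1) ->
  uniq (flatten (map row r)).
Proof.
move=> + row_uniq row_idx; elim: r => //= i r IHr /andP[i_r r_uniq].
rewrite cat_uniq row_uniq IHr // andbT; apply/hasPn => u /flattenP[_ /mapP[j j_r ->] u_j].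
apply/negP => u_i; move: i_r; suff -> : i = j by rewrite j_r.
by have := row_idx _ _ u_j; rewrite (row_idx _ _ u_i) => -[].
Qed.

Lemma mem_young_diagram l i j :
  ((i, j) \in young_diagram l) = [&& 0 < i, i <= size l, 0 < j & j <= nth 0 l i.-1].
Proof.
apply/flattenP/idP => [[_ /mapP[i' i'_l ->] /mapP[j' j'_l [-> ->]]]|].
  by move: i'_l j'_l; rewrite !mem_iota /=; lia.
case/and4P => i_gt0 i_le j_gt0 j_le.
exists [seq (i.-1.+1, j'.+1) | j' <- iota 0 (nth 0 l i.-1)].
  by apply/mapP; exists i.-1; rewrite // mem_iota; lia.
by apply/mapP; exists j.-1; rewrite ?mem_iota; [lia | congr pair; lia].
Qed.

Lemma mem_shifted_diagram l i j :
  ((i, j) \in shifted_diagram l) = [&& 0 < i, i <= size l, i <= j & j < i + nth 0 l i.-1].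
Proof.
apply/flattenP/idP => [[_ /mapP[i' i'_l ->] /mapP[j' j'_l [-> ->]]]|].
  by move: i'_l j'_l; rewrite !mem_iota /=; lia.
case/and4P => i_gt0 i_le i_le_j j_lt.
exists [seq (i.-1.+1, (j' + i.-1).+1) | j' <- iota 0 (nth 0 l i.-1)].
  by apply/mapP; exists i.-1; rewrite // mem_iota; lia.
by apply/mapP; exists (j - i); rewrite ?mem_iota; [lia | congr pair; lia].
Qed.

Lemma young_diagram_uniq l : uniq (young_diagram l).
Proof.
apply: uniq_flatten_rows (iota_uniq _ _) _ _ => [i|i u /mapP[j _ ->] //].
by rewrite map_inj_uniq ?iota_uniq // => j j' [].
Qed.

Lemma shifted_diagram_uniq l : uniq (shifted_diagram l).
Proof.
apply: uniq_flatten_rows (iota_uniq _ _) _ _ => [i|i u /mapP[j _ ->] //].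
by rewrite map_inj_uniq ?iota_uniq // => j j' [] /addIn.
Qed.

Lemma young_diagram_row_convex l i a b x : (i, a) \in young_diagram l ->
  (i, b) \in young_diagram l -> a < x < b -> (i, x) \in young_diagram l.
Proof. by rewrite !mem_young_diagram; lia. Qed.

Lemma shifted_diagram_row_convex l i a b x : (i, a) \in shifted_diagram l ->
  (i, b) \in shifted_diagram l -> a < x < b -> (i, x) \in shifted_diagram l.
Proof. by rewrite !mem_shifted_diagram; lia. Qed.

Lemma young_diagram_before l (i j : nat) : (i, j) \in young_diagram l -> 1 < j ->
  exists2 v, v \in young_diagram l & before v (i, j).
Proof.
rewrite mem_young_diagram => ij_l j_gt1.
by exists (i, j.-1); rewrite ?mem_young_diagram /before /= ?eqxx /=; lia.
Qed.

Lemma shifted_diagram_before l (i j : nat) : is_strict_partition l ->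
  (i, j) \in shifted_diagram l -> 1 < j ->
  exists2 v, v \in shifted_diagram l & before v (i, j).
Proof.
case/andP=> l_sorted l_pos.
rewrite mem_shifted_diagram => /and4P[i_gt0 i_le i_le_j j_lt] j_gt1.
have [lt_ij|le_ji] := ltnP i j.
  by exists (i, j.-1); rewrite ?mem_shifted_diagram /before /= ?eqxx /=; lia.
have -> : j = i by lia.
have lt_rows : nth 0 l i.-1 < nth 0 l i.-2.
  have gt_trans : transitive (fun x y : nat => y < x) by move=> ? ? ? ? ?; lia.
  by apply: (sorted_ltn_nth gt_trans 0 l_sorted); rewrite ?inE; lia.
have row_pos : 0 < nth 0 l i.-1 by apply/(allP l_pos)/mem_nth; rewrite prednK.
by exists (i.-1, i); rewrite ?mem_shifted_diagram /before /= ?eqxx /=; lia.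
Qed.

Theorem mainTheorem11 (l : seq nat) (c : nat) (hc : 1 <= c) :
  (is_partition l ->
     num_hadj (young_diagram l) c = num_max_right (young_diagram l) c) /\
  (is_strict_partition l ->
     num_hadj (shifted_diagram l) c = num_max_right (shifted_diagram l) c).
Proof.
split=> [_|l_strict]; apply: num_hadj_eq_num_max_right => //.
- exact: young_diagram_uniq.
- exact: young_diagram_row_convex.
- by move=> [i j]; apply: young_diagram_before.
- exact: shifted_diagram_uniq.
- exact: shifted_diagram_row_convex.
- by move=> [i j]; apply: shifted_diagram_before.
Qed.
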